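(* Let $\mathcal{X}$ be a finite nonempty set of types, $n=(n_x)_{x\in\mathcal{X}}$ nonnegative integers, and $\Phi=(\Phi_{xy})_{x,y\in\mathcal{X}}$ a real matrix, not necessarily symmetric. Define the symmetric matrix $\Phi'_{xy}=\max(\Phi_{xy},\Phi_{yx})$. Then: (i) $\mathcal{W}'_{\mathcal{P}}(n,\Phi)=\mathcal{W}_{\mathcal{P}}(n,\Phi')$; (ii) the nonexchangeable roommate problem with population $n$ and surplus $\Phi$ has a stable matching if and only if the (symmetric) roommate problem with population $n$ and surplus $\Phi'$ has a stable matching.
   Context: Nonexchangeable roommate problem: $n_x$ individuals of type $x$; an ordered pair $(x,y)$ (first partner of type $x$ in role 1, second of type $y$ in role 2; $x=y$ allowed) generates surplus $\Phi_{xy}$; singles get $0$. A matching is $\pi=(\pi_{xy})_{x,y\in\mathcal{X}}$, $\pi_{xy}\in\mathbb{N}$ the number of ordered $(x,y)$ pairs, with $\sum_{y\in\mathcal{X}}(\pi_{xy}+\pi_{yx})\le n_x$ for all $x$; its surplus is $\sum_{x,y}\pi_{xy}\Phi_{xy}$, and $\mathcal{W}'_{\mathcal{P}}(n,\Phi)$ is the maximum of this surplus over such $\pi$. A stable outcome is $(\pi,u)$ with $\pi$ feasible, $u\in\mathbb{R}^{\mathcal{X}}$, $\sum_x n_xu_x=\sum_{x,y}\pi_{xy}\Phi_{xy}$, $u_x\ge0$ and $u_x+u_y\ge\Phi_{xy}$ for all $x,y$; $\pi$ is a stable matching if such $u$ exists. Symmetric roommate problem with symmetric surplus $\Psi$: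 feasible matchings $\mathcal{P}(n)=\{\mu\in\mathbb{N}^{\mathcal{X}\times\mathcal{X}}:\ \mu_{xy}=\mu_{yx},\ 2\mu_{xx}+\sum_{y\ne x}\mu_{xy}\le n_x\ \forall x\}$, surplus $S_R(\mu;\Psi)=\sum_x\mu_{xx}\Psi_{xx}+\sum_{x\ne y}\mu_{xy}\Psi_{xy}/2$, $\mathcal{W}_{\mathcal{P}}(n,\Psi)=\max_{\mu\in\mathcal{P}(n)}S_R(\mu;\Psi)$; $\mu$ is stable if there is $u\in\mathbb{R}^{\mathcal{X}}$ with $\sum_x n_xu_x=S_R(\mu;\Psi)$, $u_x\ge0$, $u_x+u_y\ge\Psi_{xy}$ for all $x,y$. *)

From mathcomp Require Import all_boot all_order all_algebra.
Set Implicit Arguments. Unset Strict Implicit. Unset Printing Implicit Defensive.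
Import Order.TTheory GRing.Theory Num.Theory.
Local Open Scope ring_scope.

Section Roommate.
Variables (R : realFieldType) (X : finType).

(* pi x y = number of ordered (x,y) pairs *)
Definition feasibleNX (n : X -> nat) (pi : X -> X -> nat) : bool :=
  [forall x, (\sum_(y : X) (pi x y + pi y x) <= n x)%N].

Definition surplusNX (Phi : X -> X -> R) (pi : X -> X -> nat) : R :=
  \sum_(x : X) \sum_(y : X) (pi x y)%:R * Phi x y.

Definition popsize (n : X -> nat) : nat := (\sum_(x : X) n x)%N.

(* The
   enumeration over entries bounded by popsize n covers every feasible
   matching; the zero matching is feasible with surplus 0, so the default 0
   of the max is harmless. *)
Definition W'P (n : X -> nat) (Phi : X -> X -> R) : R :=
  \big[Num.max/0]_(p : {ffun X * X -> 'I_(popsize n).+1}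
                   | feasibleNX n (fun x y => nat_of_ord (p (x, y))))
     surplusNX Phi (fun x y => nat_of_ord (p (x, y))).

Definition stable_outcomeNX (n : X -> nat) (Phi : X -> X -> R)
  (pi : X -> X -> nat) (u : X -> R) : Prop :=
  [/\ feasibleNX n pi,
      \sum_(x : X) (n x)%:R * u x = surplusNX Phi pi,
      forall x, 0 <= u x &
      forall x y, Phi x y <= u x + u y].

Definition stable_matchingNX (n : X -> nat) (Phi : X -> X -> R)
  (pi : X -> X -> nat) : Prop := exists u, stable_outcomeNX n Phi pi u.

Definition has_stable_matchingNX (n : X -> nat) (Phi : X -> X -> R) : Prop :=
  exists pi, stable_matchingNX n Phi pi.

Definition feasibleR (n : X -> nat) (mu : X -> X -> nat) : bool :=
  [forall x, forall y, mu x y == mu y x] &&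
  [forall x, (2 * mu x x + \sum_(y : X | y != x) mu x y <= n x)%N].

Definition surplusR (Psi : X -> X -> R) (mu : X -> X -> nat) : R :=
  \sum_(x : X) (mu x x)%:R * Psi x x
  + \sum_(x : X) \sum_(y : X | y != x) (mu x y)%:R * Psi x y / 2.

Definition WP (n : X -> nat) (Psi : X -> X -> R) : R :=
  \big[Num.max/0]_(p : {ffun X * X -> 'I_(popsize n).+1}
                   | feasibleR n (fun x y => nat_of_ord (p (x, y))))
     surplusR Psi (fun x y => nat_of_ord (p (x, y))).

Definition stable_matchingR (n : X -> nat) (Psi : X -> X -> R)
  (mu : X -> X -> nat) : Prop :=
  feasibleR n mu /\
  exists u : X -> R,
    [/\ \sum_(x : X) (n x)%:R * u x = surplusR Psi mu,
        forall x, 0 <= u x &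
        forall x y, Psi x y <= u x + u y].

Definition has_stable_matchingR (n : X -> nat) (Psi : X -> X -> R) : Prop :=
  exists mu, stable_matchingR n Psi mu.

Definition symmax (Phi : X -> X -> R) : X -> X -> R :=
  fun x y => Num.max (Phi x y) (Phi y x).

End Roommate.

(* A nonexchangeable matching pi collapses to the symmetric matching with
   mu_xy = pi_xy + pi_yx (x <> y) and mu_xx = pi_xx; its Phi'-surplus is at
   least the Phi-surplus of pi because Phi' >= Phi entrywise.  Conversely a
   symmetric matching mu loses nothing when every pair {x, y} is seated in the
   role order realizing Phi'_xy = max (Phi_xy, Phi_yx).  Stability transfers along the same two maps: the dual
   constraints u_x + u_y >= Phi_xy for all ordered (x, y) say exactly that
   u_x + u_y >= Phi'_xy, and weak duality for the symmetric problem shows that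
   collapsing a stable matching keeps the total surplus sum_x n_x u_x. *)

From mathcomp Require Import all_boot all_order all_algebra ring.
From Stdlib Require Import FunctionalExtensionality.
Set Implicit Arguments. Unset Strict Implicit. Unset Printing Implicit Defensive.
Import Order.TTheory GRing.Theory Num.Theory.
Local Open Scope ring_scope.

Section BigMaxZero.
Variables (R : realDomainType) (I : finType) (P : pred I) (F : I -> R).

Lemma bigmax0_ge0 : 0 <= \big[Num.max/0]_(i | P i) F i.
Proof. by apply: (big_rec (fun v => 0 <= v)) => // i v _ hv; rewrite le_max hv orbT. Qed.

Lemma bigmax0_le c :
  0 <= c -> (forall i, P i -> F i <= c) -> \big[Num.max/0]_(i | P i) F i <= c.
Proof.
by move=> c_ge0 leFc; apply: (big_rec (fun v => v <= c)) => // i v Pi hv; rewrite ge_max hv leFc.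
Qed.

Lemma le_bigmax0 i : P i -> F i <= \big[Num.max/0]_(j | P j) F j.
Proof.
move=> Pi; have : i \in index_enum I by rewrite mem_index_enum.
elim: (index_enum I) => [//|a r IHr]; rewrite inE big_cons.
case/orP=> [/eqP <-|/IHr leFi]; first by rewrite Pi le_max lexx.
by case: (P a) => //; rewrite le_max leFi orbT.
Qed.

End BigMaxZero.

Section MaxOverMatchings.
Variables (R : realDomainType) (X : finType) (N : nat).

Lemma bigmax_matchings_le (P Q : (X -> X -> nat) -> bool)
    (F G : (X -> X -> nat) -> R) :
  (forall m, Q m -> forall x y, (m x y <= N)%N) ->
  (forall m, P m -> exists2 m', Q m' & F m <= G m') ->
  \big[Num.max/0]_(p : {ffun X * X -> 'I_N.+1} | P (fun x y => p (x, y)))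
     F (fun x y => p (x, y))
  <= \big[Num.max/0]_(p : {ffun X * X -> 'I_N.+1} | Q (fun x y => p (x, y)))
     G (fun x y => p (x, y)).
Proof.
move=> Q_bounded PQ; apply: bigmax0_le => [|p /PQ[m Qm leFG]]; first exact: bigmax0_ge0.
set q : {ffun X * X -> 'I_N.+1} := [ffun xy => inord (m xy.1 xy.2)].
have qE : (fun x y => nat_of_ord (q (x, y))) = m.
  do 2!apply: functional_extensionality => ?.
  by rewrite ffunE inordK // ltnS Q_bounded.
by apply: le_trans leFG _; rewrite -qE; apply: le_bigmax0; rewrite qE.
Qed.

End MaxOverMatchings.

Section OffDiagonalSums.
Variable X : finType.

Lemma sum_offdiagC (V : nmodType) (f : X -> X -> V) :
  \sum_x \sum_(y | y != x) f x y = \sum_x \sum_(y | y != x) f y x.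
Proof.
rewrite (exchange_big_dep xpredT) //; apply: eq_bigr => x _.
by apply: eq_bigl => y; rewrite eq_sym.
Qed.

Lemma sum_offdiag_pairs (V : nmodType) (g : X -> X -> V) :
  \sum_x \sum_(y | y != x) (g x y + g y x) = (\sum_x \sum_(y | y != x) g x y) *+ 2.
Proof.
rewrite mulr2n [X in _ = _ + X]sum_offdiagC -big_split; apply: eq_bigr => x _.
by rewrite -big_split.
Qed.

Lemma sum_offdiag_halve (R : numFieldType) (g h : X -> X -> R) :
  (forall x y, y != x -> g x y + g y x = h x y) ->
  \sum_x \sum_(y | y != x) h x y / 2 = \sum_x \sum_(y | y != x) g x y.
Proof.
move=> ghE.
have -> : \sum_x \sum_(y | y != x) h x y / 2 = (\sum_x \sum_(y | y != x) h x y) / 2.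
  by rewrite mulr_suml; apply: eq_bigr => x _; rewrite mulr_suml.
have -> : \sum_x \sum_(y | y != x) h x y = \sum_x \sum_(y | y != x) (g x y + g y x).
  by apply: eq_bigr => x _; apply: eq_bigr => y /ghE.
by rewrite sum_offdiag_pairs -[_ *+ 2]mulr_natr mulfK // pnatr_eq0.
Qed.

End OffDiagonalSums.

Section FeasibleMatchings.
Variables (R : realFieldType) (X : finType).
Implicit Types (n : X -> nat) (Psi : X -> X -> R) (pi mu : X -> X -> nat) (u : X -> R).

Lemma feasibleRP n mu :
  reflect ((forall x y, mu x y = mu y x) /\
           forall x, (2 * mu x x + \sum_(y | y != x) mu x y <= n x)%N)
          (feasibleR n mu).
Proof.
apply: (iffP andP) => [[/forallP mu_sym /forallP cap]|[mu_sym cap]].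
  by split=> // x y; apply/eqP/(forallP (mu_sym x)).
by split; apply/forallP=> x //; apply/forallP=> y; rewrite mu_sym.
Qed.

Lemma popsize_ge n x : (n x <= popsize n)%N.
Proof. by rewrite /popsize (bigD1 x) //= leq_addr. Qed.

Lemma feasibleNX_le_popsize n pi : feasibleNX n pi -> forall x y, (pi x y <= popsize n)%N.
Proof.
move/forallP=> cap x y; apply: leq_trans (popsize_ge n x); apply: leq_trans (cap x).
by rewrite (bigD1 y) //= -addnA leq_addr.
Qed.

Lemma feasibleR_le_popsize n mu : feasibleR n mu -> forall x y, (mu x y <= popsize n)%N.
Proof.
case/feasibleRP=> _ cap x y; apply: leq_trans (popsize_ge n x); apply: leq_trans (cap x).
have [->|yx] := eqVneq y x; first by rewrite mul2n -addnn -addnA leq_addr.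
by rewrite (bigD1 y) //= addnCA leq_addr.
Qed.

Lemma surplusR_le_dual n Psi mu u :
  feasibleR n mu -> (forall x, 0 <= u x) -> (forall x y, Psi x y <= u x + u y) ->
  surplusR Psi mu <= \sum_x (n x)%:R * u x.
Proof.
case/feasibleRP=> mu_sym cap u_ge0 le_Psi_u.
apply: (@le_trans _ _ (\sum_x (mu x x)%:R * (u x + u x)
                       + \sum_x \sum_(y | y != x) (mu x y)%:R * (u x + u y) / 2)).
  rewrite /surplusR; apply: lerD; apply: ler_sum => x _.
    by apply: ler_wpM2l; [exact: ler0n | exact: le_Psi_u].
  apply: ler_sum => y _; rewrite ler_pM2r ?invr_gt0 //.
  by apply: ler_wpM2l; [exact: ler0n | exact: le_Psi_u].
rewrite (@sum_offdiag_halve _ _ (fun x y => (mu x y)%:R * u x)); last first.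
  by move=> x y _; rewrite mu_sym mulrDr.
rewrite -big_split /=; apply: ler_sum => x _.
have -> : (mu x x)%:R * (u x + u x) + \sum_(y | y != x) (mu x y)%:R * u x
          = (2 * mu x x + \sum_(y | y != x) mu x y)%N%:R * u x.
  by rewrite natrD natrM natr_sum mulrDl -mulr_suml; ring.
by apply: ler_wpM2r; [exact: u_ge0 | rewrite ler_nat].
Qed.

End FeasibleMatchings.

Section RoommateReduction.
Variables (R : realFieldType) (X : finType).
Implicit Types (n : X -> nat) (Phi : X -> X -> R) (pi mu : X -> X -> nat) (u : X -> R).

Lemma symmaxC Phi x y : symmax Phi x y = symmax Phi y x.
Proof. by rewrite /symmax maxC. Qed.

Lemma symmax_diag Phi x : symmax Phi x x = Phi x x.
Proof. exact: maxxx. Qed.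

Lemma symmax_ge Phi x y : Phi x y <= symmax Phi x y.
Proof. by rewrite le_max lexx. Qed.

Lemma symmax_le_add_iff Phi u :
  (forall x y, symmax Phi x y <= u x + u y) <-> (forall x y, Phi x y <= u x + u y).
Proof.
split=> le_Phi_u x y; first exact: le_trans (symmax_ge _ _ _) (le_Phi_u x y).
by rewrite ge_max le_Phi_u addrC le_Phi_u.
Qed.

Definition symmetrize pi : X -> X -> nat :=
  fun x y => if x == y then pi x x else (pi x y + pi y x)%N.

Lemma symmetrize_diag pi x : symmetrize pi x x = pi x x.
Proof. by rewrite /symmetrize eqxx. Qed.

Lemma symmetrize_offdiag pi x y : y != x -> symmetrize pi x y = (pi x y + pi y x)%N.
Proof. by rewrite /symmetrize eq_sym => /negbTE->. Qed.

Lemma feasibleR_symmetrize n pi : feasibleNX n pi -> feasibleR n (symmetrize pi).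
Proof.
move/forallP=> cap; apply/feasibleRP; split=> [x y|x].
  have [->//|yx] := eqVneq y x.
  have xy : x != y by rewrite eq_sym.
  by rewrite (symmetrize_offdiag pi yx) (symmetrize_offdiag pi xy) addnC.
rewrite symmetrize_diag (eq_bigr (fun y => pi x y + pi y x)%N); last first.
  by move=> y /symmetrize_offdiag.
by apply: leq_trans (cap x); rewrite [\sum_y _](bigD1 x) //= mul2n -addnn.
Qed.

Lemma surplusNX_le_symmetrize Phi pi :
  surplusNX Phi pi <= surplusR (symmax Phi) (symmetrize pi).
Proof.
rewrite /surplusNX /surplusR.
rewrite (eq_bigr (fun x => (pi x x)%:R * Phi x x
                           + \sum_(y | y != x) (pi x y)%:R * Phi x y)); last first.
  by move=> x _; rewrite (bigD1 x).
rewrite big_split /=; apply: lerD.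
  by apply: ler_sum => x _; rewrite symmetrize_diag symmax_diag.
rewrite (@sum_offdiag_halve _ _ (fun x y => (pi x y)%:R * symmax Phi x y)); last first.
  by move=> x y yx; rewrite symmetrize_offdiag // natrD mulrDl symmaxC.
by do 2!apply: ler_sum => ? _; apply: ler_wpM2l; [exact: ler0n | exact: symmax_ge].
Qed.

(* Seats each pair {x, y}, x != y, in the role order realizing symmax; ties
   are broken by [enum_rank] so that exactly one order is chosen. *)
Definition favoured Phi x y : bool :=
  (Phi y x < Phi x y) || (Phi x y == Phi y x) && (enum_rank x < enum_rank y)%N.

Lemma favouredN Phi x y : x != y -> favoured Phi y x = ~~ favoured Phi x y.
Proof.
move=> xy; rewrite /favoured; case: ltgtP => //= _.
by case: ltngtP => // /val_inj/enum_rank_inj eq_xy; rewrite eq_xy eqxx in xy.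
Qed.

Lemma symmax_favoured Phi x y : favoured Phi x y -> symmax Phi x y = Phi x y.
Proof. by rewrite /symmax; case/orP=> [/ltW/max_l|/andP[/eqP-> _]]; rewrite ?maxxx. Qed.

Definition orient Phi mu : X -> X -> nat :=
  fun x y => if x == y then mu x x else if favoured Phi x y then mu x y else 0%N.

Lemma orient_diag Phi mu x : orient Phi mu x x = mu x x.
Proof. by rewrite /orient eqxx. Qed.

Section OrientPair.
Variables (Phi : X -> X -> R) (mu : X -> X -> nat) (x y : X).
Hypotheses (mu_sym : forall a b, mu a b = mu b a) (yx : y != x).

Lemma orient_pair : (orient Phi mu x y + orient Phi mu y x)%N = mu x y.
Proof.
have xy : x != y by rewrite eq_sym.
rewrite /orient (negbTE xy) (negbTE yx) (favouredN Phi xy).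
by case: favoured; rewrite /= ?addn0 // add0n mu_sym.
Qed.

Lemma orient_pair_surplus :
  (orient Phi mu x y)%:R * Phi x y + (orient Phi mu y x)%:R * Phi y x
  = (mu x y)%:R * symmax Phi x y.
Proof.
have xy : x != y by rewrite eq_sym.
rewrite /orient (negbTE xy) (negbTE yx) (favouredN Phi xy).
case fav: favoured => /=; first by rewrite mul0r addr0 symmax_favoured.
have fav' : favoured Phi y x by rewrite (favouredN Phi xy) fav.
by rewrite mul0r add0r symmaxC symmax_favoured // mu_sym.
Qed.

End OrientPair.

Lemma feasibleNX_orient n Phi mu : feasibleR n mu -> feasibleNX n (orient Phi mu).
Proof.
case/feasibleRP=> mu_sym cap; apply/forallP=> x; apply: leq_trans (cap x).
rewrite (bigD1 x) //= orient_diag addnn -mul2n leq_add2l.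
by apply: eq_leq; apply: eq_bigr => y yx; exact: orient_pair.
Qed.

Lemma surplusNX_orient Phi mu :
  (forall x y, mu x y = mu y x) -> surplusNX Phi (orient Phi mu) = surplusR (symmax Phi) mu.
Proof.
move=> mu_sym; rewrite /surplusNX /surplusR.
rewrite (eq_bigr (fun x => (orient Phi mu x x)%:R * Phi x x
          + \sum_(y | y != x) (orient Phi mu x y)%:R * Phi x y)); last first.
  by move=> x _; rewrite (bigD1 x).
rewrite big_split /= (sum_offdiag_halve (fun x y => orient_pair_surplus Phi mu_sym)).
by congr (_ + _); apply: eq_bigr => x _; rewrite orient_diag symmax_diag.
Qed.

Lemma stable_matchingR_symmetrize n Phi pi :
  stable_matchingNX n Phi pi -> stable_matchingR n (symmax Phi) (symmetrize pi).
Proof.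
case=> u [feas total u_ge0 /symmax_le_add_iff le_Phi_u].
have feasR := feasibleR_symmetrize feas.
split=> //; exists u; split=> //; apply: le_anti.
by rewrite surplusR_le_dual // total surplusNX_le_symmetrize.
Qed.

Lemma stable_matchingNX_orient n Phi mu :
  stable_matchingR n (symmax Phi) mu -> stable_matchingNX n Phi (orient Phi mu).
Proof.
case=> feas [u [total u_ge0 /symmax_le_add_iff le_Phi_u]].
have /feasibleRP[mu_sym _] := feas.
exists u; split=> //; first exact: feasibleNX_orient.
by rewrite surplusNX_orient.
Qed.

End RoommateReduction.

Theorem theorem4 (R : realFieldType) (X : finType) (hX : (0 < #|X|)%N)
  (n : X -> nat) (Phi : X -> X -> R) :
  W'P n Phi = WP n (symmax Phi) /\
  (has_stable_matchingNX n Phi <-> has_stable_matchingR n (symmax Phi)).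
Proof.
split.
  apply/le_anti/andP; split; apply: bigmax_matchings_le.
  - exact: feasibleR_le_popsize.
  - move=> pi feas; exists (symmetrize pi); first exact: feasibleR_symmetrize.
    exact: surplusNX_le_symmetrize.
  - exact: feasibleNX_le_popsize.
  - move=> mu feas; exists (orient Phi mu); first exact: feasibleNX_orient.
    by have /feasibleRP[mu_sym _] := feas; rewrite surplusNX_orient.
split=> [[pi /stable_matchingR_symmetrize stable]|[mu /stable_matchingNX_orient stable]].
  by exists (symmetrize pi).
by exists (orient Phi mu).
Qed.
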